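(* Let $X_1$ and $X_2$ be independent continuous random variables with densities $f_{X_1},f_{X_2}$ that are symmetric around their respective means and positive on all of $\mathbb{R}$. For $\theta\in[0,1]$ and $w\in[0,1]$ define $$L(w\mid\theta)=\theta\,\mathbf{E}\big[X_1^2\,\mathbf{1}\big((1-w)X_2^2\ge wX_1^2\big)\big]+(1-\theta)\,\mathbf{E}\big[X_2^2\,\mathbf{1}\big((1-w)X_2^2<wX_1^2\big)\big].$$ Then for each fixed $\theta\in[0,1]$, the function $w\mapsto L(w\mid\theta)$ is strictly quasi-convex and is minimized at $w^\star=\theta$.
   Context: $\mathbf{1}(\cdot)$ denotes the indicator function of an event. *)

From HB Require Import structures.
From mathcomp Require Import all_boot all_order all_algebra.
From mathcomp Require Import all_classical all_reals all_analysis.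
Set Implicit Arguments. Unset Strict Implicit. Unset Printing Implicit Defensive.
Import Order.TTheory GRing.Theory Num.Theory.
Local Open Scope classical_set_scope.
Local Open Scope ring_scope.

Definition indep_rv d (T : measurableType d) (R : realType) (P : probability T R)
  (X Y : {RV P >-> R}) : Prop :=
  forall A B : set R, measurable A -> measurable B ->
    P (X @^-1` A `&` Y @^-1` B) = (P (X @^-1` A) * P (Y @^-1` B))%E.

Definition is_density d (T : measurableType d) (R : realType) (P : probability T R)
  (X : {RV P >-> R}) (f : R -> R) : Prop :=
  measurable_fun setT f /\ (forall x, 0 <= f x) /\
  forall A : set R, measurable A ->
    P (X @^-1` A) = (\int[lebesgue_measure]_(x in A) (f x)%:E)%E.

Definition Lfn d (T : measurableType d) (R : realType) (P : probability T R)
  (X1 X2 : {RV P >-> R}) (theta w : R) : \bar R :=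
  (theta%:E * 'E_P[(fun t => X1 t ^+ 2 *
        \1_[set s | w * X1 s ^+ 2 <= (1 - w) * X2 s ^+ 2] t)%R]
   + (1 - theta)%:E * 'E_P[(fun t => X2 t ^+ 2 *
        \1_[set s | (1 - w) * X2 s ^+ 2 < w * X1 s ^+ 2] t)%R])%E.

From HB Require Import structures.
From mathcomp Require Import all_boot all_order all_algebra.
From mathcomp Require Import all_classical all_reals all_analysis.
From mathcomp Require Import ring lra measurable_realfun.
Set Implicit Arguments.
Unset Strict Implicit.
Unset Printing Implicit Defensive.
Import Order.TTheory GRing.Theory Num.Theory.
Local Open Scope classical_set_scope.
Local Open Scope ring_scope.

(* Pointwise in the outcome, L(w | theta) integrates [cost theta w (X1^2) (X2^2)], the loss of
   the rule "pay theta X1^2 if w X1^2 <= (1 - w) X2^2, else (1 - theta) X2^2".  This cost is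
   nondecreasing in w on [theta, 1] and nonincreasing on [0, theta].  Monotonicity is strict
   after integration: for theta <= w1 < w2 the two rules disagree, with a gain bounded below,
   on a box {X1^2 ~ 1 - r, X2^2 ~ r} (w1 < r < w2) whose probability is positive because the
   densities are positive and X1, X2 are independent.  A function strictly decreasing up to
   theta and strictly increasing after it is strictly quasi-convex with minimum at theta. *)

Lemma unimodal_lt_max (R : realFieldType) disp (E : orderType disp) (F : R -> E)
    (a c b : R) :
  (forall x y, a <= x -> x < y -> y <= c -> (F y < F x)%O) ->
  (forall x y, c <= x -> x < y -> y <= b -> (F x < F y)%O) ->
  forall x y lam, a <= x <= b -> a <= y <= b -> x != y -> 0 < lam < 1 ->
    (F (lam * x + (1 - lam) * y) < Order.max (F x) (F y))%O.
Proof.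
move=> Fdown Fup x y lam hx hy + lam01.
wlog xy : x y lam hx hy lam01 / x < y => [hwlog|_].
  case: (ltgtP x y) => [xy|yx|->]; [move=> _ | move=> _ | by []].
    by apply: hwlog; rewrite // lt_eqF.
  rewrite maxC (_ : lam * x + _ = (1 - lam) * y + (1 - (1 - lam)) * x); last by ring.
  by apply: hwlog; rewrite // ?lt_eqF //; lra.
case/andP: hx => ax xb; case/andP: hy => ay yb; case/andP: lam01 => lam0 lam1.
rewrite lt_max; case: (leP (lam * x + (1 - lam) * y) c) => zc.
  by rewrite Fdown //; nra.
by rewrite orbC Fup //; [exact: ltW | nra].
Qed.

Definition cost {R : realDomainType} (th w u v : R) :=
  if w * u <= (1 - w) * v then th * u else (1 - th) * v.

Section cost.
Variable R : realDomainType.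
Implicit Types th w u v a b : R.

Lemma cost_ge0 th w u v : 0 <= th <= 1 -> 0 <= u -> 0 <= v -> 0 <= cost th w u v.
Proof. by move=> /andP[th0 th1] u0 v0; rewrite /cost; case: ifP; nra. Qed.

Lemma cost_le_add th w u v : 0 <= th <= 1 -> 0 <= u -> 0 <= v -> cost th w u v <= u + v.
Proof. by move=> /andP[th0 th1] u0 v0; rewrite /cost; case: ifP; nra. Qed.

Lemma cost_indicE th w u v : cost th w u v =
  th * (u * (w * u <= (1 - w) * v)%R%:R) + (1 - th) * (v * ((1 - w) * v < w * u)%R%:R).
Proof. by rewrite /cost ltNge; case: ifP => _ /=; rewrite ?(mulr1, mulr0, addr0, add0r). Qed.

Lemma cost_le_up th w1 w2 u v : th <= w1 -> w1 <= w2 -> 0 <= u -> 0 <= v ->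
  cost th w1 u v <= cost th w2 u v.
Proof. by move=> *; rewrite /cost; do 2 case: ifPn; rewrite -?ltNge; nra. Qed.

Lemma cost_le_down th w1 w2 u v : w1 <= w2 -> w2 <= th -> 0 <= u -> 0 <= v ->
  cost th w2 u v <= cost th w1 u v.
Proof. by move=> *; rewrite /cost; do 2 case: ifPn; rewrite -?ltNge; nra. Qed.

(* On the box the rule at [w1] pays [th * u] and the one at [w2] pays [(1 - th) * v]. *)
Lemma cost_gap_up th w1 w2 a b u v : 0 <= th -> th <= w1 -> w1 < a -> b < w2 -> w2 <= 1 ->
  1 - b <= u <= 1 - a -> a <= v <= b -> cost th w1 u v + (a - th) <= cost th w2 u v.
Proof.
move=> *; rewrite /cost.
by do 2 case: ifPn; rewrite -?ltNge; nra.
Qed.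

Lemma cost_gap_down th w1 w2 a b u v : 0 <= w1 -> w1 < a -> b < w2 -> w2 <= th -> th <= 1 ->
  1 - b <= u <= 1 - a -> a <= v <= b -> cost th w2 u v + (th - b) <= cost th w1 u v.
Proof.
move=> *; rewrite /cost.
by do 2 case: ifPn; rewrite -?ltNge; nra.
Qed.

End cost.

Section integral_lemmas.
Context d (T : measurableType d) (R : realType) (mu : {measure set T -> \bar R}).

Lemma integral_gt0 (D : set T) (f : T -> R) : measurable D -> measurable_fun D f ->
  (forall x, D x -> 0 < f x) -> (0 < mu D)%E -> (0 < \int[mu]_(x in D) (f x)%:E)%E.
Proof.
move=> mD mf fD0 muD0; rewrite lt0e integral_ge0 ?andbT; last first.
  by move=> x Dx; rewrite lee_fin ltW // fD0.
apply/negP => /eqP intf0.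
have [N [mN muN0 DN]] : ae_eq mu D (EFin \o f) (cst 0%E).
  apply/ae_eq_integral_abs => //; first exact/measurable_EFinP.
  by rewrite -intf0; apply: eq_integral => x /[!inE] Dx; rewrite gee0_abs // lee_fin ltW ?fD0.
suff muD_le0 : (mu D <= 0)%E by rewrite ltNge muD_le0 in muD0.
rewrite -muN0 le_measure ?inE //.
by move=> x Dx; apply: DN => /(_ Dx) [] /eqP; rewrite gt_eqF ?fD0.
Qed.

Lemma integral_lt_of_gap (g h : T -> R) (B : set T) (del : R) :
  measurable_fun setT g -> measurable_fun setT h -> (forall t, 0 <= g t) ->
  (\int[mu]_t (g t)%:E < +oo)%E -> measurable B -> 0 < del -> (0 < mu B)%E ->
  (forall t, g t <= h t) -> (forall t, B t -> g t + del <= h t) ->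
  (\int[mu]_t (g t)%:E < \int[mu]_t (h t)%:E)%E.
Proof.
move=> mg mh g0 intg_fin mB del0 muB0 gh gh_B.
have mg' : measurable_fun setT (EFin \o g) by exact/measurable_EFinP.
have m1B : measurable_fun setT (EFin \o (\1_B : T -> R)).
  exact/measurable_EFinP/measurable_indic.
have g0' t : [set: T] t -> (0 <= (g t)%:E)%E by rewrite lee_fin.
have i0 t : [set: T] t -> (0 <= (\1_B t : R)%:E)%E by rewrite lee_fin.
have : (\int[mu]_t ((g t)%:E + del%:E * (\1_B t)%:E) <= \int[mu]_t (h t)%:E)%E.
  apply: ge0_le_integral => //.
  - by move=> t _; rewrite adde_ge0 ?mule_ge0 ?g0' ?i0 ?lee_fin ?ltW.
  - by apply: emeasurable_funD => //; exact: emeasurable_funM.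
  - exact/measurable_EFinP.
  - move=> t _; rewrite -EFinM -EFinD lee_fin indicE.
    by case: (boolP (t \in B)) => [/set_mem/gh_B|_]; rewrite ?mulr1 ?mulr0 ?addr0.
rewrite ge0_integralD //; last 2 first.
- by move=> t _; rewrite mule_ge0 ?i0 ?lee_fin ?ltW.
- exact: emeasurable_funM.
rewrite (ge0_integralZl_EFin _ _ i0 m1B (ltW del0)) //.
have -> : (\int[mu]_t (\1_B t : R)%:E = mu B)%E by rewrite integral_indic // setIT.
apply: lt_le_trans; rewrite lteDl ?mule_gt0 ?lte_fin //.
by rewrite ge0_fin_numE // integral_ge0.
Qed.

End integral_lemmas.

Lemma sqr_in_itv (R : rcfType) (a b x : R) : 0 <= a -> 0 <= b ->
  Num.sqrt a <= x <= Num.sqrt b -> a <= x ^+ 2 <= b.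
Proof.
move=> a0 b0 /andP[ax xb]; have sa0 := sqrtr_ge0 a.
rewrite -[a](sqr_sqrtr a0) -[b](sqr_sqrtr b0).
by apply/andP; split; rewrite lerXn2r ?nnegrE //; exact: le_trans ax.
Qed.

Section random_variables.
Context d (T : measurableType d) (R : realType) (P : probability T R).

Lemma density_itv_gt0 (X : {RV P >-> R}) (f : R -> R) (a b : R) :
  is_density X f -> (forall x, 0 < f x) -> a < b -> (0 < P (X @^-1` `[a, b]))%E.
Proof.
move=> [mf [_ PX]] f_gt0 ab; rewrite PX //; apply: integral_gt0 => //.
- exact: measurable_funS mf.
- by have := lebesgue_measure_itv `[a, b]; rewrite /= lte_fin ab => ->; rewrite lte_fin subr_gt0.
Qed.

Variables X1 X2 : {RV P >-> R}.

Definition sqr_box (a b : R) : set T :=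
  X1 @^-1` `[Num.sqrt (1 - b), Num.sqrt (1 - a)] `&` X2 @^-1` `[Num.sqrt a, Num.sqrt b].

Lemma measurable_sqr_box a b : measurable (sqr_box a b).
Proof. by apply: measurableI; exact: measurable_funPTI. Qed.

Lemma sqr_boxP a b t : 0 <= a -> b <= 1 -> a <= b -> sqr_box a b t ->
  1 - b <= X1 t ^+ 2 <= 1 - a /\ a <= X2 t ^+ 2 <= b.
Proof.
move=> a0 b1 ab [/=]; rewrite !in_itv /= => X1t X2t.
by split; apply: sqr_in_itv => //; lra.
Qed.

Lemma sqr_box_gt0 (f1 f2 : R -> R) a b : indep_rv X1 X2 ->
  is_density X1 f1 -> is_density X2 f2 -> (forall x, 0 < f1 x) -> (forall x, 0 < f2 x) ->
  0 <= a -> a < b -> b <= 1 -> (0 < P (sqr_box a b))%E.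
Proof.
move=> indep dX1 dX2 f1_gt0 f2_gt0 a0 ab b1.
rewrite /sqr_box indep //; apply: mule_gt0.
- by apply: density_itv_gt0 dX1 f1_gt0 _; rewrite ltr_sqrt; lra.
- by apply: density_itv_gt0 dX2 f2_gt0 _; rewrite ltr_sqrt; lra.
Qed.

End random_variables.

Section loss.
Context d (T : measurableType d) (R : realType) (P : probability T R).
Variables X1 X2 : {RV P >-> R}.

Definition loss (th w : R) (t : T) : R := cost th w (X1 t ^+ 2) (X2 t ^+ 2).

Lemma measurable_scaled_sqr (X : {RV P >-> R}) (c : R) :
  measurable_fun setT (fun t => c * X t ^+ 2).
Proof. exact/measurable_funM/measurable_funX. Qed.

Lemma measurable_loss th w : measurable_fun setT (loss th w).
Proof.
apply: measurable_fun_ifT; last 2 first.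
- exact: measurable_scaled_sqr.
- exact: measurable_scaled_sqr.
by apply: measurable_fun_ler; exact: measurable_scaled_sqr.
Qed.

Lemma Lfn_integral th w : 0 <= th <= 1 ->
  Lfn X1 X2 th w = (\int[P]_t (loss th w t)%:E)%E.
Proof.
move=> /andP[th0 th1].
pose g1 t := (X1 t ^+ 2 * \1_[set s | w * X1 s ^+ 2 <= (1 - w) * X2 s ^+ 2] t)%:E.
pose g2 t := (X2 t ^+ 2 * \1_[set s | (1 - w) * X2 s ^+ 2 < w * X1 s ^+ 2] t)%:E.
have g10 t : [set: T] t -> (0 <= g1 t)%E by rewrite lee_fin mulr_ge0 ?sqr_ge0.
have g20 t : [set: T] t -> (0 <= g2 t)%E by rewrite lee_fin mulr_ge0 ?sqr_ge0.
have mg1 : measurable_fun setT g1.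
  apply/measurable_EFinP/measurable_funM; first exact: measurable_funX.
  apply/measurable_indic; rewrite -[X in measurable X]setTI.
  by apply: measurable_fun_ler => //; exact: measurable_scaled_sqr.
have mg2 : measurable_fun setT g2.
  apply/measurable_EFinP/measurable_funM; first exact: measurable_funX.
  apply/measurable_indic; rewrite -[X in measurable X]setTI.
  by apply: measurable_fun_ltr => //; exact: measurable_scaled_sqr.
transitivity (\int[P]_t (th%:E * g1 t + (1 - th)%:E * g2 t))%E.
  rewrite ge0_integralD //; last 4 first.
  - by move=> t _; rewrite mule_ge0 ?g10 ?lee_fin.
  - exact: emeasurable_funM.
  - by move=> t _; rewrite mule_ge0 ?g20 ?lee_fin ?subr_ge0.
  - exact: emeasurable_funM.
  by rewrite !ge0_integralZl_EFin ?subr_ge0 // /Lfn unlock.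
apply: eq_integral => t _.
by rewrite /loss cost_indicE /g1 /g2 !indicE !mem_setE EFinD !EFinM.
Qed.

Lemma integral_loss_lt_pinfty th w : 0 <= th <= 1 ->
  P.-integrable setT (fun t => (X1 t ^+ 2)%:E) ->
  P.-integrable setT (fun t => (X2 t ^+ 2)%:E) ->
  (\int[P]_t (loss th w t)%:E < +oo)%E.
Proof.
move=> th01 iX1 iX2.
apply: le_lt_trans (integrable_lty _ (integrableD _ iX1 iX2)) => //.
apply: ge0_le_integral => //.
- by move=> t _; rewrite lee_fin cost_ge0 ?sqr_ge0.
- exact/measurable_EFinP/measurable_loss.
- exact: emeasurable_funD (measurable_int _ iX1) (measurable_int _ iX2).
- by move=> t _; rewrite /= -EFinD lee_fin cost_le_add ?sqr_ge0.
Qed.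

Variables f1 f2 : R -> R.
Hypothesis indep : indep_rv X1 X2.
Hypotheses (dX1 : is_density X1 f1) (dX2 : is_density X2 f2).
Hypotheses (f1_gt0 : forall x, 0 < f1 x) (f2_gt0 : forall x, 0 < f2 x).
Hypothesis iX1 : P.-integrable setT (fun t => (X1 t ^+ 2)%:E).
Hypothesis iX2 : P.-integrable setT (fun t => (X2 t ^+ 2)%:E).

Lemma Lfn_lt_of_box_gap th w w' a b del : 0 <= th <= 1 ->
  0 <= a -> a < b -> b <= 1 -> 0 < del ->
  (forall t, loss th w t <= loss th w' t) ->
  (forall t, sqr_box X1 X2 a b t -> loss th w t + del <= loss th w' t) ->
  (Lfn X1 X2 th w < Lfn X1 X2 th w')%E.
Proof.
move=> th01 a0 ab b1 del0 le_ww' gap; rewrite !Lfn_integral //.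
apply: (integral_lt_of_gap _ _ _ _ (measurable_sqr_box _ _ a b) del0) => //.
- exact: measurable_loss.
- exact: measurable_loss.
- by move=> t; rewrite cost_ge0 ?sqr_ge0.
- exact: integral_loss_lt_pinfty.
- exact: sqr_box_gt0 indep dX1 dX2 f1_gt0 f2_gt0 a0 ab b1.
- exact: gap.
Qed.

Lemma Lfn_lt_up th w1 w2 : 0 <= th -> th <= w1 -> w1 < w2 -> w2 <= 1 ->
  (Lfn X1 X2 th w1 < Lfn X1 X2 th w2)%E.
Proof.
move=> th0 thw1 w12 w21; pose a := (2 * w1 + w2) / 3; pose b := (w1 + 2 * w2) / 3.
apply: (@Lfn_lt_of_box_gap _ _ _ a b (a - th)); rewrite /a /b; try lra.
- by move=> t; apply: cost_le_up; rewrite ?sqr_ge0 // ltW.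
- move=> t /sqr_boxP [|||X1t X2t]; try lra.
  by apply: cost_gap_up X1t X2t => //; lra.
Qed.

Lemma Lfn_lt_down th w1 w2 : 0 <= w1 -> w1 < w2 -> w2 <= th -> th <= 1 ->
  (Lfn X1 X2 th w2 < Lfn X1 X2 th w1)%E.
Proof.
move=> w10 w12 w2th th1; pose a := (2 * w1 + w2) / 3; pose b := (w1 + 2 * w2) / 3.
apply: (@Lfn_lt_of_box_gap _ _ _ a b (th - b)); rewrite /a /b; try lra.
- by move=> t; apply: cost_le_down; rewrite ?sqr_ge0 // ltW.
- move=> t /sqr_boxP [|||X1t X2t]; try lra.
  by apply: cost_gap_down X1t X2t => //; lra.
Qed.

End loss.

Theorem lemma2 (d : measure_display) (T : measurableType d) (R : realType)
  (P : probability T R) (X1 X2 : {RV P >-> R}) (f1 f2 : R -> R) :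
  indep_rv X1 X2 ->
  is_density X1 f1 -> is_density X2 f2 ->
  P.-integrable setT (fun t => (X1 t ^+ 2)%:E) ->
  P.-integrable setT (fun t => (X2 t ^+ 2)%:E) ->
  (forall x, f1 (fine 'E_P[X1] + x) = f1 (fine 'E_P[X1] - x)) ->
  (forall x, f2 (fine 'E_P[X2] + x) = f2 (fine 'E_P[X2] - x)) ->
  (forall x, 0 < f1 x) -> (forall x, 0 < f2 x) ->
  forall theta : R, 0 <= theta <= 1 ->
    (* strict quasi-convexity on [0,1] *)
    (forall x y lam : R, 0 <= x <= 1 -> 0 <= y <= 1 -> x != y -> 0 < lam < 1 ->
       (Lfn X1 X2 theta (lam * x + (1 - lam) * y)
          < maxe (Lfn X1 X2 theta x) (Lfn X1 X2 theta y))%E) /\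
    (* minimized at w = theta *)
    (forall w : R, 0 <= w <= 1 -> (Lfn X1 X2 theta theta <= Lfn X1 X2 theta w)%E).
Proof.
move=> indep dX1 dX2 iX1 iX2 _ _ f1_gt0 f2_gt0 th /andP[th0 th1].
have up := Lfn_lt_up indep dX1 dX2 f1_gt0 f2_gt0 iX1 iX2 th0.
have down := Lfn_lt_down indep dX1 dX2 f1_gt0 f2_gt0 iX1 iX2.
split.
- apply: (@unimodal_lt_max _ _ _ _ 0 th 1) => [x y x0 xy yth | x y thx xy y1].
  + exact: down.
  + exact: up.
- move=> w /andP[w0 w1]; case: (ltgtP w th) => [wth | thw | -> //].
  + exact/ltW/down.
  + exact/ltW/up.
Qed.
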